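(* Let $A$ be a finite alphabet. A sliding block code $\phi: A^{\mathbb{N}} \to A^{\mathbb{N}}$ is a local homeomorphism and $*$-commutes with the shift map $\sigma$ if and only if $\phi$ is a $k$-fold covering map (for some $k\in\mathbb{N}$) of the form $\phi=\tau_d$ for a regressive block map $d$.
   Context: $A$ is a finite set with the discrete topology; $\mathbb{N}=\{1,2,3,\dots\}$; $A^{\mathbb{N}}$ is the space of one-sided infinite sequences over $A$ with the product topology; $\sigma(x_1x_2x_3\cdots)=x_2x_3\cdots$. A block map is a function $d:A^n\to A$ ($n\in\mathbb{N}$), and $\tau_d: A^{\mathbb{N}}\to A^{\mathbb{N}}$ is $\tau_d(x)_i=d(x_i\cdots x_{i+n-1})$; a sliding block code is a map of the form $\tau_d$. The block map $d$ is regressive if for each fixed $x_1\cdots x_{n-1}\in A^{n-1}$ the map $A\to A$, $a\mapsto d(ax_1\cdots x_{n-1})$, is bijective. A continuous map $f:X\to Y$ is a local homeomorphism if every $x\in X$ has an open neighborhood $U$ such that $f(U)$ is open in $Y$ and $f:U\to f(U)$ is a homeomorphism. Two functions $S,T: X\to X$ $*$-commute if $ST=TS$ and for every $(y,z)$ with $S(y)=T(z)$ there exists a unique $x$ with $T(x)=y$ and $S(x)=z$. For a continuous surjection $p:E\to B$, an open set $U\subseteq B$ is evenly covered if $p^{-1}(U)$ is a union of pairwise disjoint open sets $V_\alpha$ each of which $p$ maps homeomorphically onto $U$; $p$ is a covering map if every point of $B$ has an evenly covered open neighborhood, and a $k$-fold covering map if moreover $|p^{-1}(b)|=k$ for every $b\in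 B$. *)

From HB Require Import structures.
From mathcomp Require Import all_boot all_order all_algebra.
From mathcomp Require Import all_classical all_reals all_analysis.
Set Implicit Arguments. Unset Strict Implicit. Unset Printing Implicit Defensive.
Local Open Scope classical_set_scope.
Local Open Scope card_scope.

(* One-sided sequences over A, with the product of discrete topologies.
   Coordinate i (i = 0,1,2,...) of x corresponds to x_{i+1} in the paper. *)
Definition seqspace (A : finType) : Type :=
  prod_topology (fun _ : nat => discrete_topology A).

Definition sigma_shift (A : finType) (x : seqspace A) : seqspace A := fun i => x i.+1.

Definition tau (A : finType) (m : nat) (d : m.+1.-tuple A -> A)
  (x : seqspace A) : seqspace A :=
  fun i => d [tuple x (i + j)%N | j < m.+1].

Definition is_sliding_block_code (A : finType) (phi : seqspace A -> seqspace A) :=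
  exists (m : nat) (d : m.+1.-tuple A -> A), phi = tau d.

Definition regressive (A : finType) (m : nat) (d : m.+1.-tuple A -> A) :=
  forall w : m.-tuple A, bijective (fun a : A => d (cons_tuple a w)).

(* f restricted to U is a homeomorphism onto f(U) (subspace topologies). *)
Definition homeo_on (X Y : topologicalType) (U : set X) (f : X -> Y) :=
  [/\ {in U &, injective f},
      {within U, continuous f} &
      forall V : set X, open V ->
        exists W : set Y, open W /\ f @` (U `&` V) = f @` U `&` W].

Definition local_homeomorphism (X Y : topologicalType) (f : X -> Y) :=
  continuous f /\
  forall x : X, exists U : set X,
    [/\ open U, U x, open (f @` U) & homeo_on U f].

Definition star_commute (X : Type) (S T : X -> X) :=
  S \o T = T \o S /\
  forall y z : X, S y = T z -> exists! x : X, T x = y /\ S x = z.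

Definition evenly_covered (E B : topologicalType) (p : E -> B) (U : set B) :=
  open U /\
  exists F : set (set E),
    [/\ p @^-1` U = \bigcup_(V in F) V,
        (forall V, F V -> open V),
        (forall V W, F V -> F W -> V <> W -> V `&` W = set0) &
        (forall V, F V -> p @` V = U /\ homeo_on V p)].

Definition covering_map (E B : topologicalType) (p : E -> B) :=
  [/\ continuous p, (forall b : B, exists e : E, p e = b) &
      forall b : B, exists U : set B, U b /\ evenly_covered p U].

Definition kfold_covering_map (E B : topologicalType) (k : nat) (p : E -> B) :=
  covering_map p /\ forall b : B, p @^-1` [set b] #= `I_k.

From HB Require Import structures.
From mathcomp Require Import all_boot all_order all_algebra.
From mathcomp Require Import all_classical all_reals all_analysis.
From mathcomp Require Import zify.
Set Implicit Arguments. Unset Strict Implicit. Unset Printing Implicit Defensive.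
Local Open Scope classical_set_scope.
Local Open Scope card_scope.

(* Regressivity of d says that the head of x is determined by tau_d(x)_0 and
   the tail sigma(x); this is exactly unique lifting, so d is regressive iff
   tau_d *-commutes with sigma.  For the topology, compactness of A^N makes a
   local homeomorphism tau_d uniform: there are L and M such that tau_d is
   injective on L-cylinders and the L-cylinder around y maps onto the
   M-cylinder around tau_d(y).  Hence every M-cylinder is evenly covered by
   such sheets, a fibre injects into A^L through prefixes, and the fibre
   cardinality is constant on M-cylinders.  By *-commutation sigma maps the
   fibre over z bijectively onto the fibre over sigma(z), and every point is
   sigma^M of a point of any prescribed M-cylinder, so all fibres have the
   same finite cardinality k > 0.  Conversely every covering map is a local
   homeomorphism. *)

Definition cylinder (A : finType) (n : nat) (x : seqspace A) : set (seqspace A) :=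
  [set y | forall i, (i < n)%N -> y i = x i].

Lemma iter_sigma_shift (A : finType) n (x : seqspace A) :
  iter n (@sigma_shift A) x = fun i => x (i + n)%N.
Proof.
elim: n => [|n IH] /=; first by apply: funext => i; rewrite addn0.
by rewrite IH; apply: funext => i; rewrite /sigma_shift addSnnS.
Qed.

Section SlidingBlockCode.
Variables (A : finType) (m : nat) (d : m.+1.-tuple A -> A).
Implicit Types x y z : seqspace A.

Lemma tau0 x : tau d x 0%N = d (cons_tuple (x 0%N) [tuple x j.+1 | j < m]).
Proof.
rewrite /tau; congr d; apply: eq_from_tnth => -[[|j] Hj].
  by rewrite tnth_mktuple.
rewrite tnth_mktuple add0n (tnth_nth (x 0%N)) /=.
by rewrite (nth_map (Ordinal (Hj : (j < m)%N))) ?size_enum_ord // nth_enum_ord.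
Qed.

Lemma tau_sigma_shift x : tau d (sigma_shift x) = sigma_shift (tau d x).
Proof.
by apply: funext => i; rewrite /tau /sigma_shift; congr d;
  apply: eq_from_tnth => j; rewrite !tnth_mktuple addSn.
Qed.

Lemma tauS x i : tau d x i.+1 = tau d (sigma_shift x) i.
Proof. by rewrite tau_sigma_shift. Qed.

Lemma cylinder_tau n x y : cylinder (n + m) x y -> cylinder n (tau d x) (tau d y).
Proof.
move=> xy i lt_in; rewrite /tau; congr d; apply: eq_from_tnth => j.
rewrite !tnth_mktuple xy //; have := ltn_ord j; lia.
Qed.

(* The lift of [(y, z)] has [y] as its tail and, by regressivity, a unique
   head [a] with [d (a :: y_0 .. y_(m-1)) = z_0]. *)
Lemma regressive_star_commute :
  regressive d -> star_commute (tau d) (@sigma_shift A).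
Proof.
move=> reg; split; first by apply: funext => x /=; rewrite tau_sigma_shift.
move=> y z yz; have [g dg gd] := reg [tuple y j | j < m].
pose x : seqspace A := fun i => if i is j.+1 then y j else g (z 0%N).
have tau_x : tau d x = z.
  apply: funext => -[|i]; first by rewrite tau0 /=; exact: gd.
  by rewrite tauS (_ : sigma_shift x = y) // yz.
exists x; split => // x' [tail_x' tau_x'].
apply: funext => -[|i] /=; last by rewrite -tail_x'.
rewrite -tau_x' tau0.
have -> : [tuple x' j.+1 | j < m] = [tuple y j | j < m].
  by apply: eq_from_tnth => j; rewrite !tnth_mktuple -tail_x'.
by rewrite dg.
Qed.

(* Two heads [a], [a'] with equal images yield two lifts of the same pair. *)
Lemma star_commute_regressive :
  star_commute (tau d) (@sigma_shift A) -> regressive d.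
Proof.
move=> [_ lift_uniq] w; apply: injF_bij => a a' daa'.
pose y : seqspace A := fun i => nth a w i.
pose x : seqspace A := fun i => if i is j.+1 then y j else a.
pose x' : seqspace A := fun i => if i is j.+1 then y j else a'.
have tail_y : [tuple y j | j < m] = w.
  by apply: eq_from_tnth => j; rewrite tnth_mktuple (tnth_nth a).
have tau_xx' : tau d x = tau d x'.
  by apply: funext => -[|i]; rewrite ?tau0 /= ?tail_y // !tauS.
have [x0 [_ x0_uniq]] := lift_uniq y (tau d x) (tau_sigma_shift x).
have x_eq_x' : x = x'.
  rewrite -(x0_uniq x (conj erefl erefl)).
  exact: x0_uniq x' (conj erefl (esym tau_xx')).
by have := congr1 (fun f => f 0%N) x_eq_x'.
Qed.

End SlidingBlockCode.

Lemma seq_exists_bounded (T : eqType) (s : seq T) (Q : T -> nat -> Prop) :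
  (forall t, t \in s -> exists n, Q t n) ->
  exists N, forall t, t \in s -> exists2 n, (n < N)%N & Q t n.
Proof.
elim: s => [|a s IH] Qs; first by exists 0%N.
have [N HN] := IH (fun t ts => Qs t (mem_behead (ts : t \in behead (a :: s)))).
have [n Qan] := Qs a (mem_head _ _).
exists (maxn N n).+1 => t; rewrite in_cons => /orP[/eqP->|/HN[k ltkN Qtk]].
  by exists n => //; lia.
by exists k => //; lia.
Qed.

Section Cylinders.
Variable A : finType.
Implicit Types x y z : seqspace A.

Lemma cylinder_sym n x y : cylinder n x y -> cylinder n y x.
Proof. by move=> xy i lt_in; rewrite xy. Qed.

Lemma cylinder_trans n x y z : cylinder n x y -> cylinder n y z -> cylinder n x z.
Proof. by move=> xy yz i lt_in; rewrite yz // xy. Qed.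

Lemma subset_cylinder n n' x : (n <= n')%N -> cylinder n' x `<=` cylinder n x.
Proof. by move=> le_nn' y xy i lt_in; apply: xy; lia. Qed.

Lemma cylinder_eq n x y : cylinder n x y -> cylinder n x = cylinder n y.
Proof.
move=> xy; apply/seteqP; split => z; first exact: cylinder_trans (cylinder_sym xy).
exact: cylinder_trans xy.
Qed.

(* A basic open set of the product topology constrains finitely many
   coordinates, hence contains a cylinder. *)
Lemma nbhs_cylinder x (U : set (seqspace A)) :
  nbhs x U -> exists n, cylinder n x `<=` U.
Proof.
move=> [] P [] [] Q QfinP <- [] V JV Vx PU.
have [L Lsub VL] := QfinP _ JV.
have : forall M, M \in finmap.enum_fset L ->
    exists w, forall y, y w = x w -> isSubBaseTopological.b M y.
  move=> M LM; move: (LM) => /Lsub /set_mem [] w _ [N oN NM].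
  exists w => y yw; rewrite -NM /=.
  have : isSubBaseTopological.b M x by move: Vx; rewrite -VL => /(_ _ LM).
  by rewrite -NM /= yw.
move=> /seq_exists_bounded [n Hn]; exists n => y xy; apply: PU; exists V => //.
have Vy : V y by rewrite -VL => M LM; have [w ltwn Hw] := Hn M LM; apply: Hw; exact: xy.
exact: Vy.
Qed.

Lemma cylinder_nbhs x n : nbhs x (cylinder n x).
Proof.
elim: n => [|n IH]; first by apply: filterS (@filterT _ _ _) => y _ i; rewrite ltn0.
have : nbhs x (proj n @^-1` [set x n] : set (seqspace A)).
  apply: open_nbhs_nbhs; split => //.
  suff : @open (seqspace A) (proj n @^-1` [set x n]) by [].
  by apply: open_comp; [move=> + _; exact: proj_continuous | apply: discrete_open].
move=> xn; apply: filterS (filterI IH xn) => y [xy yn] i.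
by rewrite ltnS leq_eqVlt => /orP[/eqP->|]; [exact: yn | exact: xy].
Qed.

Lemma open_cylinder x n : open (cylinder n x).
Proof.
rewrite openE => y xy; apply: filterS (cylinder_nbhs y n) => z yz i lt_in.
by rewrite yz // xy.
Qed.

Lemma seqspace_compact : compact [set: seqspace A].
Proof.
have := tychonoff (fun n : nat =>
  @finite_compact (discrete_topology A) setT finite_finset).
by congr (compact _); rewrite eqEsubset.
Qed.

End Cylinders.

(* [compact_cover] is stated for pointed spaces. *)
Definition pointed_seqspace (A : finType) (a : A) : Type := seqspace A.
HB.instance Definition _ (A : finType) (a : A) := Topological.on (pointed_seqspace a).
HB.instance Definition _ (A : finType) (a : A) :=
  isPointed.Build (pointed_seqspace a) (fun _ => a).

Lemma cylinder_cover_bounded (A : finType) (P : seqspace A -> nat -> Prop) :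
  (forall x, exists n, P x n) ->
  exists N, forall y, exists x n, [/\ (n <= N)%N, P x n & cylinder n x y].
Proof.
move=> HP; have [[a _]|noA] := pselect (exists a : A, True); last first.
  by exists 0%N => y; exfalso; apply: noA; exists (y 0%N).
have := @seqspace_compact A; rewrite (@compact_cover (pointed_seqspace a)).
move=> /(_ _ [set xn : seqspace A * nat | P xn.1 xn.2] (fun xn => cylinder xn.2 xn.1)).
case.
- by move=> xn _; exact: open_cylinder.
- by move=> y _; have [n Hn] := HP y; exists (y, n) => //; exact: cylinder_sym.
move=> D Dsub Dcov.
have [N HN] := @seq_exists_bounded _ (finmap.enum_fset D) (fun xn k => (xn.2 < k)%N)
   (fun xn _ => ex_intro _ xn.2.+1 (ltnSn _)).
exists N => y; have [xn /= xnD xny] := Dcov y I.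
have [k ltkN Hk] := HN xn xnD.
exists xn.1, xn.2; split => //; first by lia.
by have := Dsub _ xnD; rewrite inE.
Qed.

Lemma local_homeomorphism_open_map (X Y : topologicalType) (f : X -> Y) (O : set X) :
  local_homeomorphism f -> open O -> open (f @` O).
Proof.
move=> [_ lh] oO; rewrite openE => _ [y Oy <-].
have [U [oU Uy oTU [_ _ homeoU]]] := lh y.
have [W [oW UOW]] := homeoU O oO.
apply: (@filterS _ _ _ (f @` U `&` W)).
  by rewrite -UOW => _ [z [_ Oz] <-]; exists z.
by apply: open_nbhs_nbhs; split; [exact: openI | rewrite -UOW; exists y].
Qed.

Lemma covering_map_local_homeomorphism (E B : topologicalType) (p : E -> B) :
  covering_map p -> local_homeomorphism p.
Proof.
move=> [cont _ cover]; split => // x.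
have [U [Upx [oU [F [pU oF _ homeoF]]]]] := cover (p x).
have : (p @^-1` U) x by [].
rewrite pU => -[V FV Vx]; have [pV homeoV] := homeoF V FV.
by exists V; split => //; [exact: oF | rewrite pV].
Qed.

Section LocalHomeomorphism.
Variables (A : finType) (m : nat) (d : m.+1.-tuple A -> A).
Hypothesis lh : local_homeomorphism (tau d).

Lemma tau_uniformly_injective :
  exists L, forall u v, cylinder L u v -> tau d u = tau d v -> u = v.
Proof.
have : forall x, exists n, forall u v,
    cylinder n x u -> cylinder n x v -> tau d u = tau d v -> u = v.
  move=> x; have [U [oU Ux _ [injU _ _]]] := lh.2 x.
  have [n xU] := nbhs_cylinder (open_nbhs_nbhs (conj oU Ux)).
  by exists n => u v xu xv; apply: injU; rewrite inE; exact: xU.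
move=> /cylinder_cover_bounded [N HN].
exists N => u v uv tau_uv; have [x [n [le_nN injx xu]]] := HN u.
apply: injx tau_uv => //; apply: cylinder_trans xu _; exact: subset_cylinder uv.
Qed.

(* Openness of [tau d] makes the image of each [L]-cylinder a neighbourhood;
   compactness makes the size of that neighbourhood uniform. *)
Lemma tau_uniform_lift L : exists M, forall y z,
  cylinder M (tau d y) z -> exists2 y', cylinder L y y' & tau d y' = z.
Proof.
have : forall x, exists n K, [/\ (L <= n)%N, (K + m <= n)%N &
    cylinder K (tau d x) `<=` tau d @` cylinder L x].
  move=> x; have xL : (tau d @` cylinder L x) (tau d x) by exists x.
  have oL := local_homeomorphism_open_map lh (open_cylinder x L).
  have [K HK] := nbhs_cylinder (open_nbhs_nbhs (conj oL xL)).
  by exists (maxn L (K + m)), K; split => //; lia.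
move=> /cylinder_cover_bounded [N HN].
exists N => y z yz; have [x [n [le_nN [K [le_Ln le_Kn HK]] xy]]] := HN y.
have xy' : cylinder K (tau d x) (tau d y).
  by apply: cylinder_tau; apply: subset_cylinder xy; lia.
have [y' xy'' <-] : (tau d @` cylinder L x) z.
  by apply: HK; apply: cylinder_trans xy' _; apply: subset_cylinder yz; lia.
exists y' => //; apply: cylinder_trans xy''.
by apply: cylinder_sym; apply: subset_cylinder xy.
Qed.

End LocalHomeomorphism.

Section Sheets.
Variables (A : finType) (m : nat) (d : m.+1.-tuple A -> A).
Hypothesis lh : local_homeomorphism (tau d).
Variables L M : nat.
Hypothesis tau_inj : forall u v, cylinder L u v -> tau d u = tau d v -> u = v.
Hypothesis tau_lift : forall y z,
  cylinder M (tau d y) z -> exists2 y', cylinder L y y' & tau d y' = z.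

Definition sheet (x : seqspace A) : set (seqspace A) :=
  cylinder L x `&` tau d @^-1` cylinder M (tau d x).

Lemma open_sheet x : open (sheet x).
Proof.
apply: openI; first exact: open_cylinder.
by apply: open_comp; [move=> y _; exact: lh.1 | exact: open_cylinder].
Qed.

Lemma image_sheet x : tau d @` sheet x = cylinder M (tau d x).
Proof.
apply/seteqP; split; first by move=> _ [y [_ y_in] <-].
move=> z xz; have [y xy tau_y] := tau_lift xz.
by exists y; rewrite // /sheet /preimage /= tau_y.
Qed.

Lemma homeo_on_sheet x : homeo_on (sheet x) (tau d).
Proof.
split.
- move=> y y'; rewrite !inE => -[xy _] [xy' _].
  by apply: tau_inj; exact: cylinder_trans (cylinder_sym xy) xy'.
- exact: continuous_subspaceT lh.1.
- move=> O oO; exists (tau d @` (cylinder L x `&` O)); split.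
    apply: local_homeomorphism_open_map => //.
    by apply: openI => //; exact: open_cylinder.
  rewrite image_sheet; apply/seteqP; split.
    by move=> _ [y [[xy xMy] Oy] <-]; split => //; exists y.
  move=> z [xz [y [xy Oy] tau_y]]; exists y => //.
  by split => //; split => //; rewrite /preimage /= tau_y.
Qed.

Lemma evenly_covered_cylinder b : evenly_covered (tau d) (cylinder M b).
Proof.
split; first exact: open_cylinder.
exists (sheet @` (tau d @^-1` [set b])); split.
- apply/seteqP; split => y.
    move=> by_; have [y' yy' tau_y'] := tau_lift (cylinder_sym by_).
    exists (sheet y'); first by exists y'.
    by split; [exact: cylinder_sym | rewrite /preimage /= tau_y'].
  by move=> [_ [x tau_x <-] [_]]; rewrite /preimage /= tau_x.
- by move=> _ [x _ <-]; exact: open_sheet.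
- move=> _ _ [x tau_x <-] [x' tau_x' <-] neq.
  apply/seteqP; split => // y [[xy _] [x'y _]].
  by apply: neq; rewrite /sheet (cylinder_eq xy) (cylinder_eq x'y) tau_x tau_x'.
- move=> _ [x tau_x <-]; rewrite image_sheet tau_x.
  by split => //; exact: homeo_on_sheet.
Qed.

End Sheets.

Lemma card_eq_II_neq0 (T : Type) (S : set T) k :
  (0 < k)%N -> S #= `I_k -> S !=set0.
Proof.
move=> k_gt0 Sk; apply/set0P/negP => /eqP S0.
by move: Sk; rewrite S0 card_eq_sym card_eq0 => /eqP/seteqP[/(_ 0%N k_gt0)].
Qed.

Section Fibres.
Variables (A : finType) (m : nat) (d : m.+1.-tuple A -> A).
Hypothesis sc : star_commute (tau d) (@sigma_shift A).
Variables L M : nat.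
Hypothesis tau_inj : forall u v, cylinder L u v -> tau d u = tau d v -> u = v.
Hypothesis tau_lift : forall y z,
  cylinder M (tau d y) z -> exists2 y', cylinder L y y' & tau d y' = z.

Local Notation fibre b := (tau d @^-1` [set b]).

(* By uniqueness of lifts, [sigma_shift] maps the fibre over [z]
   bijectively onto the fibre over [sigma_shift z]. *)
Lemma card_fibre_shift z : fibre z #= fibre (sigma_shift z).
Proof.
have <- : @sigma_shift A @` fibre z = fibre (sigma_shift z).
  apply/seteqP; split.
    by move=> _ [x tau_x <-]; rewrite /preimage /= tau_sigma_shift tau_x.
  by move=> y tau_y; have [x [[<- ?] _]] := sc.2 y z tau_y; exists x.
apply: card_esym; apply: inj_card_eq => x x'; rewrite !inE => tau_x tau_x' xx'.
have tau_sx : tau d (sigma_shift x) = sigma_shift z by rewrite tau_sigma_shift tau_x.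
have [x0 [_ x0_uniq]] := sc.2 _ _ tau_sx.
by rewrite -(x0_uniq x (conj erefl tau_x)); exact: x0_uniq.
Qed.

Definition prefix (x : seqspace A) : L.-tuple A := [tuple x i | i < L].

Lemma card_fibre_prefix b : fibre b #= prefix @` fibre b.
Proof.
apply: card_esym; apply: inj_card_eq => x x'; rewrite !inE => tau_x tau_x' xx'.
apply: tau_inj; last by rewrite tau_x tau_x'.
move=> i lt_iL; have := congr1 (fun t => tnth t (Ordinal lt_iL)) xx'.
by rewrite !tnth_mktuple.
Qed.

Lemma prefix_fibre_subset b b' :
  cylinder M b b' -> prefix @` fibre b `<=` prefix @` fibre b'.
Proof.
move=> bb' _ [x tau_x <-].
have xb' : cylinder M (tau d x) b' by rewrite tau_x.
have [x' xx' tau_x'] := tau_lift xb'.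
by exists x' => //; apply: eq_from_tnth => i; rewrite !tnth_mktuple xx'.
Qed.

Lemma card_fibre_cylinder b b' : cylinder M b b' -> fibre b #= fibre b'.
Proof.
move=> bb'; have prefix_eq : prefix @` fibre b = prefix @` fibre b'.
  by apply/seteqP; split; apply: prefix_fibre_subset => //; exact: cylinder_sym.
apply: card_eq_trans (card_fibre_prefix b) _.
by rewrite prefix_eq; exact: card_esym (card_fibre_prefix b').
Qed.

Lemma card_fibre_iter n z : fibre z #= fibre (iter n (@sigma_shift A) z).
Proof.
elim: n => [|n IH] /=; first exact: card_eqxx.
exact: card_eq_trans IH (card_fibre_shift _).
Qed.

(* Every [b] is [sigma_shift^M] of a point in the [M]-cylinder of [b0]. *)
Lemma card_fibre_const b0 b : fibre b0 #= fibre b.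
Proof.
pose b' : seqspace A := fun i => if (i < M)%N then b0 i else b (i - M)%N.
have b0b' : cylinder M b0 b' by move=> i lt_iM; rewrite /b' lt_iM.
have <- : iter M (@sigma_shift A) b' = b.
  by rewrite iter_sigma_shift; apply: funext => i; rewrite /b' ifF ?addnK //; lia.
exact: card_eq_trans (card_fibre_cylinder b0b') (card_fibre_iter M b').
Qed.

Lemma card_fibre_uniform : exists k, (0 < k)%N /\ forall b, fibre b #= `I_k.
Proof.
have [[x0 _]|empty] := pselect (exists x0 : seqspace A, True); last first.
  by exists 1%N; split => // b; exfalso; apply: empty; exists b.
have [k fibre_k] : finite_set (prefix @` fibre (tau d x0)) by exact: finite_finset.
have fibre0_k := card_eq_trans (card_fibre_prefix (tau d x0)) fibre_k.
exists k; split.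
  case: k fibre_k fibre0_k => // _; rewrite II0 card_eq0 => /eqP fibre0.
  by have : fibre (tau d x0) x0 by []; rewrite fibre0.
by move=> b; exact: card_eq_trans (card_esym (card_fibre_const _ b)) fibre0_k.
Qed.

End Fibres.

Lemma tau_kfold_covering_map (A : finType) (m : nat) (d : m.+1.-tuple A -> A) :
  local_homeomorphism (tau d) -> star_commute (tau d) (@sigma_shift A) ->
  exists k, (0 < k)%N /\ kfold_covering_map k (tau d).
Proof.
move=> lh sc; have [L tau_inj] := tau_uniformly_injective lh.
have [M tau_lift] := tau_uniform_lift lh L.
have [k [k_gt0 fibre_k]] := card_fibre_uniform sc tau_inj tau_lift.
exists k; split => //; split => //; split; first exact: lh.1.
  by move=> b; have [x] := card_eq_II_neq0 k_gt0 (fibre_k b); exists x.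
move=> b; exists (cylinder M b); split => //.
exact: (evenly_covered_cylinder lh tau_inj tau_lift b).
Qed.

Theorem theorem5p14 (A : finType) (phi : seqspace A -> seqspace A) :
  is_sliding_block_code phi ->
  (local_homeomorphism phi /\ star_commute phi (@sigma_shift A)) <->
  (exists k : nat, (0 < k)%N /\ kfold_covering_map k phi /\
     exists (m : nat) (d : m.+1.-tuple A -> A), regressive d /\ phi = tau d).
Proof.
move=> [m [d ->]]; split.
- move=> [lh sc]; have [k [k_gt0 cover]] := tau_kfold_covering_map lh sc.
  exists k; split=> //; split=> //.
  by exists m, d; split=> //; exact: star_commute_regressive.
- move=> [k [_ [[cover _] [m' [d' [reg' tau_dd']]]]]].
  split; first exact: covering_map_local_homeomorphism.
  by rewrite tau_dd'; exact: regressive_star_commute.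
Qed.
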